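(* Let $(\star)$ be a linear system over $\mathbb{F}_q$ ($q$ a prime power) with coefficient matrix $A\in\mathbb{F}_q^{m\times k}$ which is of type (RC), non-degenerate and irreducible. Let $j_1\ne j_2$ be indices in the same column equivalence class, and let $\{(x^{(i)}_1,\dots,x^{(i)}_k)\}_{i=1}^L$ be a list of pairwise disjoint solutions of $(\star)$ in $(\mathbb{F}_q^n)^k$. If $L\ge4q^k(\Gamma_q)^n$, then there exist $i\in[L]$ and a solution $(y_1,\dots,y_k)$ of $(\star)$ such that: (i) $y_j=x^{(i)}_j$ for all $j\ne j_1,j_2$, and $y_j\in\{x^{(1)}_j,\dots,x^{(L)}_j\}$ for $j\in\{j_1,j_2\}$; (ii) $\mathrm{Ann}_{\mathrm{bal}}(y_1,\dots,y_k)\subseteq\mathrm{Ann}_{\mathrm{bal}}(x^{(i)}_1,\dots,x^{(i)}_k)$; (iii) no $b\in\mathrm{Ann}_{\mathrm{bal}}(y_1,\dots,y_k)$ breaks the pair $\{j_1,j_2\}$.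
   Context: Solutions are tuples in $(\mathbb{F}_q^n)^k$ with $\sum_ja_{ij}x_j=0$ for all $i$. Two solutions $(x_j)$, $(y_j)$ are disjoint if $\{x_1,\dots,x_k\}\cap\{y_1,\dots,y_k\}=\varnothing$. Indices $j,j'$ are equivalent if columns $j,j'$ of $A$ are nonzero scalar multiples of one another; classes are column equivalence classes. A vector $b\in\mathbb{F}_q^k$ breaks the pair $\{j_1,j_2\}$ (two distinct indices in one class) if, after appending $b$ as an extra row to $A$, the columns $j_1,j_2$ are no longer scalar multiples of one another. $\mathrm{Ann}_{\mathrm{bal}}(x_1,\dots,x_k)=\{b\in\mathbb{F}_q^k:\sum_jb_jx_j=0,\ \sum_jb_j=0\}$. Type (RC): every row of $A$ sums to $0$ and at most one column equivalence class has size $1$. Non-degenerate: rows of $A$ linearly independent and no zero column. Irreducible: not equivalent (same row space) to a system whose variables split into at least two classes with each equation only using variables of one class. $\Gamma_q:=q\,J(q)$ where $J(t)=\frac1t\min_{0<x<1}\frac{1+x+\cdots+x^{t-1}}{x^{(t-1)/3}}$. *)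

From HB Require Import structures.
From mathcomp Require Import all_boot all_order all_algebra all_field.
From mathcomp Require Import all_classical all_reals all_analysis.
Set Implicit Arguments. Unset Strict Implicit. Unset Printing Implicit Defensive.
Import Order.TTheory GRing.Theory Num.Theory.
Local Open Scope ring_scope.

Section LinSys.
Variables (F : finFieldType) (m k n : nat).

Definition is_solution (A : 'M[F]_(m, k)) (x : 'I_k -> 'rV[F]_n) : Prop :=
  forall i : 'I_m, \sum_(j < k) A i j *: x j = 0.

Definition col_equiv (r : nat) (A : 'M[F]_(r, k)) (j j' : 'I_k) : Prop :=
  exists c : F, c != 0 /\ col j A = c *: col j' A.

Definition breaks (A : 'M[F]_(m, k)) (j1 j2 : 'I_k) (b : 'rV[F]_k) : Prop :=
  ~ col_equiv (col_mx A b) j1 j2.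

Definition Ann_bal (x : 'I_k -> 'rV[F]_n) (b : 'rV[F]_k) : Prop :=
  \sum_(j < k) b 0 j *: x j = 0 /\ \sum_(j < k) b 0 j = 0.

Definition singleton_class (A : 'M[F]_(m, k)) (j : 'I_k) : Prop :=
  forall j', col_equiv A j j' -> j' = j.

Definition type_RC (A : 'M[F]_(m, k)) : Prop :=
  (forall i : 'I_m, \sum_(j < k) A i j = 0) /\
  (forall j j', singleton_class A j -> singleton_class A j' -> j = j').

Definition non_degenerate (A : 'M[F]_(m, k)) : Prop :=
  row_free A /\ (forall j : 'I_k, col j A != 0).

(* A is reducible if some system B with the same row space has its variables
   split into at least two classes (labelling c with >= 2 values) such that
   every equation only uses variables of one class. *)
Definition irreducible_sys (A : 'M[F]_(m, k)) : Prop :=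
  ~ exists (m' : nat) (B : 'M[F]_(m', k)) (c : 'I_k -> 'I_k),
      (B == A)%MS /\ (exists j j', c j != c j') /\
      (forall i : 'I_m', exists l, forall j, B i j != 0 -> c j = l).

End LinSys.

(* J(t) = (1/t) min_{0<x<1} (1+x+...+x^{t-1}) / x^{(t-1)/3};
   the minimum is attained, so it equals the infimum used here. *)
Definition Jfun (R : realType) (t : nat) (x : R) : R :=
  (\sum_(i < t) x ^+ i) / powR x ((t%:R - 1) / 3).

Definition Jconst (R : realType) (t : nat) : R :=
  t%:R^-1 * inf [set y | exists x : R, 0 < x < 1 /\ y = Jfun t x].

Definition Gamma (R : realType) (q : nat) : R := q%:R * Jconst R q.

(* Write col j1 A = c * col j2 A.  For a, b, i in [L], the tuple [swap a b i]
   taking coordinate j1 from x^(a), j2 from x^(b) and the others from x^(i) is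
   a solution as soon as c x^(a)_j1 + x^(b)_j2 = c x^(i)_j1 + x^(i)_j2, and it
   then satisfies (ii) and (iii) unless some balanced annihilator w of it has
   w_j1 <> c w_j2; in that case x^(a)_j1 is determined by x^(i) and w.  Joining
   i to such a gives a digraph of out-degree < q^k, so there is an independent
   set S with L <= (2 q^k - 1) |S|.  If the theorem failed, the equation
   c x^(a)_j1 + x^(b)_j2 - (c x^(i)_j1 + x^(i)_j2) = 0 would have only the
   solutions a = b = i in S: a tricolored sum-free set in F_q^n, of size at
   most Gamma_q^n by the slice-rank method (Rankin's trick counts the
   low-degree monomials, a tensor-power argument removes the constant 3). *)

From mathcomp Require Import all_boot all_order all_algebra finfield.
From mathcomp Require Import zify ring.
Set Implicit Arguments. Unset Strict Implicit. Unset Printing Implicit Defensive.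
Import Order.TTheory GRing.Theory Num.Theory.

Section BoundedOutdegree.
Variables (V : finType) (E : rel V) (D : nat).
Hypothesis outdeg_le : forall v, #|[set a | E v a]| <= D.

Definition independent (S : {set V}) :=
  forall v a, v \in S -> a \in S -> v != a -> ~~ E v a.

Lemma card_set_in_sum (T : {set V}) (P : pred V) :
  #|[set a in T | P a]| = \sum_(a in T) P a.
Proof.
rewrite -sum1_card big_mkcond /= [RHS]big_mkcond /=; apply: eq_bigr => a _.
by rewrite !inE; case: (a \in T); case: (P a).
Qed.

(* The in- and out-degrees inside [T] have the same average, at most [D]. *)
Lemma exists_low_degree (T : {set V}) : T != set0 ->
  exists2 v, v \in T & #|[set a in T | E v a]| + #|[set a in T | E a v]| <= 2 * D.
Proof.
move=> T0.
case: (boolP [exists v in T,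
  #|[set a in T | E v a]| + #|[set a in T | E a v]| <= 2 * D]) => [/exists_inP //|].
rewrite negb_exists_in => /forall_inP high; exfalso.
have sum_high : \sum_(v in T) (2 * D).+1 <=
    \sum_(v in T) (#|[set a in T | E v a]| + #|[set a in T | E a v]|).
  by apply: leq_sum => v /high; rewrite -ltnNge.
have in_out : \sum_(v in T) #|[set a in T | E a v]| =
              \sum_(v in T) #|[set a in T | E v a]|.
  under eq_bigr do rewrite card_set_in_sum.
  by rewrite exchange_big; under [RHS]eq_bigr do rewrite card_set_in_sum.
have out_le : \sum_(v in T) #|[set a in T | E v a]| <= \sum_(v in T) D.
  apply: leq_sum => v _; apply: leq_trans (outdeg_le v); apply: subset_leq_card.
  by apply/subsetP => a; rewrite !inE => /andP [].
rewrite big_split /= in_out !sum_nat_const in sum_high out_le.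
have : #|T| != 0 by rewrite cards_eq0.
lia.
Qed.

(* Greedy: keep a vertex of low total degree and discard its neighbours. *)
Lemma large_independent_subset N (T : {set V}) : #|T| <= N ->
  exists S : {set V}, [/\ S \subset T, independent S & #|T| <= (2 * D).+1 * #|S|].
Proof.
elim: N T => [|N IH] T card_T.
  by exists set0; rewrite sub0set; split=> // [v a|]; rewrite ?inE //; lia.
have [->|T0] := eqVneq T set0.
  by exists set0; rewrite sub0set cards0; split=> // v a; rewrite inE.
have [v vT deg_v] := exists_low_degree T0.
pose X := v |: ([set a in T | E v a] :|: [set a in T | E a v]).
have vX : v \in X by rewrite !inE eqxx.
have card_X : #|X| <= (2 * D).+1.
  rewrite cardsU1 -add1n; apply: leq_add (leq_b1 _) _.
  exact: leq_trans (leq_card_setU _ _) deg_v.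
have card_TX : #|T| <= #|T :\: X| + (2 * D).+1.
  rewrite -(cardsID X T) addnC leq_add2l; apply: leq_trans card_X.
  by apply: subset_leq_card; rewrite subsetIr.
have vTX : v \notin T :\: X by rewrite in_setD vX.
have [|S [sub_S ind_S card_S]] := IH (T :\: X).
  rewrite -ltnS; apply: leq_trans card_T; apply: proper_card.
  by apply/properP; split; [rewrite subsetDl | exists v].
have outside_X a : a \in S -> a \in T /\ a \notin X.
  by move/(subsetP sub_S); rewrite in_setD => /andP [].
exists (v |: S); split.
- by apply/subsetP => a; rewrite !inE => /orP [/eqP -> // | /outside_X []].
- move=> a b; rewrite !inE => /orP [/eqP -> | aS] /orP [/eqP -> | bS].
  + by rewrite eqxx.
  + move=> _; have [bT] := outside_X b bS.
    by apply: contra => Evb; rewrite !inE bT Evb !orbT.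
  + move=> _; have [aT] := outside_X a aS.
    by apply: contra => Eav; rewrite !inE aT Eav !orbT.
  + exact: ind_S.
- have vS : v \notin S by apply: contra vTX; apply: (subsetP sub_S).
  rewrite cardsU1 vS /=; apply: leq_trans card_TX _.
  by rewrite mulnDr muln1 addnC leq_add2l.
Qed.

Lemma exists_large_independent :
  exists S : {set V}, independent S /\ #|V| <= (2 * D).+1 * #|S|.
Proof.
have [S [_ ind_S]] := @large_independent_subset #|[set: V]| [set: V] (leqnn _).
by rewrite cardsT; exists S.
Qed.

End BoundedOutdegree.

Local Open Scope ring_scope.

Lemma mxrank_mxsub (F : fieldType) m n m' n' (f : 'I_m' -> 'I_m) (g : 'I_n' -> 'I_n)
  (A : 'M[F]_(m, n)) : (\rank (mxsub f g A) <= \rank A)%N.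
Proof.
have -> : mxsub f g A = rowsub f 1%:M *m (A *m colsub g 1%:M).
  rewrite mulmx_colsub mulmx1 mul_rowsub_mx mul1mx.
  by apply/matrixP => i j; rewrite !mxE.
exact: leq_trans (mxrankM_maxr _ _) (mxrankM_maxl _ _).
Qed.

(* [h] is a combination of the rows of a basis of [K] taking the value [1] on
   [\rank K] coordinates where that basis restricts to an invertible matrix. *)
Lemma exists_submx_diag_rank (F : fieldType) p N (K : 'M[F]_(p, N)) :
  exists2 h : 'rV[F]_N, (h <= K)%MS & (\rank K <= \rank (diag_mx h))%N.
Proof.
pose B := row_base K.
have full_BT : row_full B^T by rewrite /row_full mxrank_tr eq_row_base.
pose s := fullrankfun full_BT.
have unit_Bs : (rowsub s B^T)^T \in unitmx by rewrite unitmx_tr fullrowsub_unit.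
pose h : 'rV[F]_N := const_mx 1 *m invmx (rowsub s B^T)^T *m B.
exists h; first by rewrite (submx_trans (submxMl _ _)) // eq_row_base.
have h_s i : h 0 (s i) = 1.
  have : colsub s h = const_mx 1.
    rewrite /h -mulmx_colsub.
    have -> : colsub s B = (rowsub s B^T)^T by rewrite trmx_mxsub trmxK.
    by rewrite -mulmxA mulVmx // mulmx1.
  by move/matrixP/(_ 0 i); rewrite !mxE.
have sub_diag : mxsub s s (diag_mx h) = 1%:M.
  apply/matrixP => i j.
  by rewrite [LHS]mxE [LHS]mxE h_s (inj_eq (@fullrankfun_inj _ _ _ _ full_BT)) mxE.
by rewrite -[X in (X <= _)%N](mxrank1 F) -sub_diag mxrank_mxsub.
Qed.

(* A vector [h] orthogonal to the first family, with [diag_mx h] of rank at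
   least [N - #|U1|], kills the first sum; the other two write [diag_mx h] as
   a sum of matrices of ranks at most [#|U2|] and [#|U3|]. *)
Lemma slice_rank_diagonal_le (F : fieldType) (N : nat) (U1 U2 U3 : finType)
  (f1 : U1 -> 'I_N -> F) (g1 : U1 -> 'I_N -> 'I_N -> F)
  (f2 : U2 -> 'I_N -> F) (g2 : U2 -> 'I_N -> 'I_N -> F)
  (f3 : U3 -> 'I_N -> F) (g3 : U3 -> 'I_N -> 'I_N -> F) :
  (forall a b c : 'I_N, ((a == b) && (b == c))%:R =
     \sum_u f1 u a * g1 u b c + \sum_u f2 u b * g2 u a c + \sum_u f3 u c * g3 u a b) ->
  (N <= #|U1| + #|U2| + #|U3|)%N.
Proof.
move=> decomp.
pose F1 : 'M[F]_(N, #|U1|) := \matrix_(a, j) f1 (enum_val j) a.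
have [h ker_h rank_h] := exists_submx_diag_rank (kermx F1).
have h_f1 u : \sum_a h 0 a * f1 u a = 0.
  move/sub_kermxP: ker_h => /matrixP /(_ 0 (enum_rank u)).
  by rewrite !mxE; under eq_bigr do rewrite !mxE enum_rankK.
pose F2 : 'M[F]_(N, #|U2|) := \matrix_(b, j) f2 (enum_val j) b.
pose G2 : 'M[F]_(#|U2|, N) := \matrix_(j, c) \sum_a h 0 a * g2 (enum_val j) a c.
pose F3 : 'M[F]_(N, #|U3|) := \matrix_(c, j) f3 (enum_val j) c.
pose G3 : 'M[F]_(#|U3|, N) := \matrix_(j, b) \sum_a h 0 a * g3 (enum_val j) a b.
have diag_h : diag_mx h = F2 *m G2 + (F3 *m G3)^T.
  apply/matrixP => b c.
  have -> : diag_mx h b c = \sum_a h 0 a * ((a == b) && (b == c))%:R.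
    rewrite mxE (bigD1 b) //= eqxx big1 ?addr0 ?mulr_natr // => a /negPf ->.
    by rewrite mulr0.
  under eq_bigr do rewrite decomp !mulrDr.
  rewrite !mxE !big_split /=.
  have -> : \sum_a h 0 a * (\sum_u f1 u a * g1 u b c) = 0.
    under eq_bigr do rewrite big_distrr /=.
    rewrite exchange_big big1 // => u _.
    by under eq_bigr do rewrite mulrA; rewrite -big_distrl /= h_f1 mul0r.
  rewrite add0r; congr (_ + _).
    under eq_bigr do rewrite big_distrr /=.
    rewrite exchange_big /= (big_enum_val (A := predT)); apply: eq_bigr => j _.
    by rewrite !mxE big_distrr /=; apply: eq_bigr => a _; rewrite mulrCA.
  under eq_bigr do rewrite big_distrr /=.
  rewrite exchange_big /= (big_enum_val (A := predT)); apply: eq_bigr => j _.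
  by rewrite !mxE big_distrr /=; apply: eq_bigr => a _; rewrite mulrCA.
have rank_diag : (\rank (diag_mx h) <= #|U2| + #|U3|)%N.
  rewrite diag_h; apply: leq_trans (mxrank_add _ _) _; apply: leq_add.
    exact: leq_trans (mxrankM_maxl _ _) (rank_leq_col _).
  by rewrite mxrank_tr; exact: leq_trans (mxrankM_maxl _ _) (rank_leq_col _).
have rank_ker : (N - #|U1| <= \rank (kermx F1))%N.
  by rewrite mxrank_ker leq_sub2l // rank_leq_col.
rewrite -addnA -leq_subLR.
exact: leq_trans rank_ker (leq_trans rank_h rank_diag).
Qed.

Lemma sumr_option (R : nmodType) (T : finType) (x0 : T) (G : option T -> R) :
  \sum_t G t = G None + \sum_x G (Some x).
Proof.
rewrite (bigD1 None) //=; congr (_ + _).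
rewrite (reindex (@Some T)) /=; first by apply: eq_bigl.
by exists (odflt x0) => [x _ | [y|]].
Qed.

Lemma count_letters3 m (w : 'I_m -> 'I_3) :
  (#|[pred s | val (w s) == 0%N]| + #|[pred s | val (w s) == 1%N]|
   + #|[pred s | val (w s) == 2%N]|)%N = m.
Proof.
transitivity (\sum_(s < m) 1)%N; last by rewrite sum1_card card_ord.
rewrite (partition_big w predT) // !big_ord_recr big_ord0 /= add0n.
have count_l (l : 'I_3) :
    (\sum_(s < m | true && (w s == l)) 1)%N = #|[pred s | val (w s) == val l]|.
  by rewrite sum1_card; apply: eq_card => s; rewrite !inE.
by rewrite !count_l.
Qed.

Section TricoloredSumFree.
Variable F : finFieldType.
Local Notation q := #|F|.

Lemma expf_card_pred (z : F) : z ^+ q.-1 = (z != 0)%:R.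
Proof.
have q_gt0 : (0 < q)%N by rewrite ltnW // card_finNzRing_gt1.
have [->|z0] := eqVneq z 0.
  by rewrite expr0n /= -[q.-1]prednK // -ltnS prednK // card_finNzRing_gt1.
by apply: (mulIf z0); rewrite -exprSr prednK // expf_card mul1r.
Qed.

(* The expansion of [1 - (a + b + c) ^+ q.-1]: the term [None] is the constant
   [1]; the term [Some w] is, with sign [-1], the product over the [q.-1]
   factors of the summand [a], [b] or [c] selected by the letter [w s]. *)
Definition expansion_term := option {ffun 'I_q.-1 -> 'I_3}.

Definition term_sign (t : expansion_term) : F := if t is Some _ then -1 else 1.

Definition term_deg (t : expansion_term) (l : nat) : nat :=
  if t is Some w then #|[pred s | val (w s) == l]| else 0%N.

Definition pick3 (a b c : F) (l : 'I_3) : F :=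
  if val l == 0%N then a else if val l == 1%N then b else c.

Lemma term_deg_sum_le t : (term_deg t 0 + term_deg t 1 + term_deg t 2 <= q.-1)%N.
Proof. by case: t => [w|] //=; rewrite count_letters3. Qed.

Lemma term_deg_lt t l : (l <= 2)%N -> (term_deg t l < q)%N.
Proof.
move=> l_le2; have q_gt0 : (0 < q)%N := ltnW (card_finNzRing_gt1 F).
rewrite -(prednK q_gt0) ltnS; apply: leq_trans (term_deg_sum_le t).
by case: l l_le2 => [|[|[|]]] // _; lia.
Qed.

Lemma indicator_sum3_expansion (a b c : F) :
  (a + b + c == 0)%:R =
  \sum_(t : expansion_term)
     term_sign t * (a ^+ term_deg t 0 * b ^+ term_deg t 1 * c ^+ term_deg t 2).
Proof.
rewrite (sumr_option [ffun=> ord0]) /= !expr0 !mulr1.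
have -> : (a + b + c == 0)%:R = 1 - (a + b + c) ^+ q.-1 :> F.
  by rewrite expf_card_pred; case: (a + b + c == 0); rewrite ?subrr ?subr0.
congr (_ + _).
have -> : (a + b + c) ^+ q.-1 = \prod_(s < q.-1) \sum_(l < 3) pick3 a b c l.
  by rewrite !big_ord_recl big_ord0 addr0 addrA prodr_const card_ord.
rewrite bigA_distr_bigA /= -sumrN; apply: eq_bigr => w _.
rewrite mulN1r; congr (- _).
rewrite (partition_big w predT) //= !big_ord_recr big_ord0 /= mul1r.
have prod_l (l : 'I_3) : \prod_(s < q.-1 | true && (w s == l)) pick3 a b c (w s)
                        = pick3 a b c l ^+ #|[pred s | val (w s) == val l]|.
  rewrite -prodr_const; apply: eq_big => s; first by rewrite !inE.
  by move=> /= /eqP ->.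
by rewrite !prod_l.
Qed.

Variable C : finType.

Definition monomial (x : C -> F) (e : {ffun C -> 'I_q}) : F := \prod_i x i ^+ e i.

Definition total_deg (e : {ffun C -> 'I_q}) : nat := (\sum_i (e i : nat))%N.

Definition low_deg_exponents : {set {ffun C -> 'I_q}} :=
  [set e | (3 * total_deg e <= q.-1 * #|C|)%N].

Definition ord3_0 : 'I_3 := Ordinal (isT : (0 < 3)%N).
Definition ord3_1 : 'I_3 := Ordinal (isT : (1 < 3)%N).
Definition ord3_2 : 'I_3 := Ordinal (isT : (2 < 3)%N).

Definition term_exponents (l : 'I_3) (phi : {ffun C -> expansion_term}) :
  {ffun C -> 'I_q} := [ffun i => Ordinal (term_deg_lt (phi i) (ltn_ord l))].

Definition term_coef (phi : {ffun C -> expansion_term}) : F :=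
  \prod_i term_sign (phi i).

Lemma term_exponentsE l phi i : (term_exponents l phi i : nat) = term_deg (phi i) l.
Proof. by rewrite ffunE. Qed.

Lemma prod_indicator_expansion (x y z : C -> F) :
  \prod_i (x i + y i + z i == 0)%:R =
  \sum_(phi : {ffun C -> expansion_term}) term_coef phi *
     (monomial x (term_exponents ord3_0 phi) * monomial y (term_exponents ord3_1 phi)
      * monomial z (term_exponents ord3_2 phi)).
Proof.
under eq_bigr do rewrite indicator_sum3_expansion.
rewrite bigA_distr_bigA /=; apply: eq_bigr => phi _.
rewrite /term_coef /monomial -!big_split /=; apply: eq_bigr => i _.
by rewrite !term_exponentsE.
Qed.

(* The three exponent vectors of a term have total degree at most
   [q.-1 * #|C|], so one of them is in [low_deg_exponents]. *)
Lemma term_exponents_low phi :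
  term_exponents ord3_0 phi \notin low_deg_exponents ->
  term_exponents ord3_1 phi \notin low_deg_exponents ->
  term_exponents ord3_2 phi \in low_deg_exponents.
Proof.
have deg_sum : (total_deg (term_exponents ord3_0 phi)
  + total_deg (term_exponents ord3_1 phi)
  + total_deg (term_exponents ord3_2 phi) <= q.-1 * #|C|)%N.
  rewrite /total_deg -!big_split /= mulnC -sum_nat_const; apply: leq_sum => i _.
  by rewrite !term_exponentsE term_deg_sum_le.
by rewrite !inE -!ltnNge; lia.
Qed.

Lemma sum_by_low_exponent (P : pred {ffun C -> expansion_term})
    (p : {ffun C -> expansion_term} -> {ffun C -> 'I_q}) (x : C -> F)
    (Y : {ffun C -> expansion_term} -> F) :
  (forall phi, P phi -> p phi \in low_deg_exponents) ->
  \sum_(phi | P phi) monomial x (p phi) * Y phi =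
  \sum_(u < #|low_deg_exponents|) monomial x (enum_val u) *
        \sum_(phi | P phi && (p phi == enum_val u)) Y phi.
Proof.
move=> P_low; rewrite (partition_big p (mem low_deg_exponents)) //= -(big_enum_val
  (fun e => monomial x e * \sum_(phi | P phi && (p phi == e)) Y phi)) /=.
apply: eq_bigr => e _; rewrite big_distrr /=.
by apply: eq_bigr => phi /andP [_ /eqP ->].
Qed.

Definition tricolored_sumfree (I : finType) (al be ga : I -> C -> F) :=
  forall a b c, (forall i, al a i + be b i + ga c i = 0) <-> (a = b /\ b = c).

Lemma tricolored_sumfree_indicator (I : finType) (al be ga : I -> C -> F) :
  tricolored_sumfree al be ga -> forall a b c,
  ((a == b) && (b == c))%:R = \prod_i (al a i + be b i + ga c i == 0)%:R :> F.
Proof.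
move=> sumfree a b c.
have [all0|] := boolP [forall i, al a i + be b i + ga c i == 0].
  have [eab ebc] : a = b /\ b = c by apply/sumfree => i; apply/eqP; move/forallP: all0.
  subst; rewrite !eqxx big1 // => i _.
  by move/forallP: all0 => /(_ i) ->.
rewrite negb_forall => /existsP [i /negPf nz].
rewrite (bigD1 i) //= nz mul0r.
case: eqP => [eab|] //=; case: eqP => [ebc|] //=; subst.
by rewrite (proj2 (sumfree _ _ _) (conj erefl erefl) i) eqxx in nz.
Qed.

(* Each term of the expansion of [[a = b = c]] is charged to a coordinate
   slice, according to which exponent vector is of low degree. *)
Lemma tricolored_sumfree_card_le (I : finType) (al be ga : I -> C -> F) :
  tricolored_sumfree al be ga -> (#|I| <= 3 * #|low_deg_exponents|)%N.
Proof.
move=> sumfree.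
pose Es := low_deg_exponents.
pose ev (a : 'I_#|I|) : I := enum_val a.
pose E0 := term_exponents ord3_0; pose E1 := term_exponents ord3_1.
pose E2 := term_exponents ord3_2.
pose f1 (u : 'I_#|Es|) a := monomial (al (ev a)) (enum_val u).
pose g1 (u : 'I_#|Es|) b c := \sum_(phi | (E0 phi \in Es) && (E0 phi == enum_val u))
  term_coef phi * (monomial (be (ev b)) (E1 phi) * monomial (ga (ev c)) (E2 phi)).
pose f2 (u : 'I_#|Es|) b := monomial (be (ev b)) (enum_val u).
pose g2 (u : 'I_#|Es|) a c :=
  \sum_(phi | ((E0 phi \notin Es) && (E1 phi \in Es)) && (E1 phi == enum_val u))
  term_coef phi * (monomial (al (ev a)) (E0 phi) * monomial (ga (ev c)) (E2 phi)).
pose f3 (u : 'I_#|Es|) c := monomial (ga (ev c)) (enum_val u).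
pose g3 (u : 'I_#|Es|) a b :=
  \sum_(phi | ((E0 phi \notin Es) && (E1 phi \notin Es)) && (E2 phi == enum_val u))
  term_coef phi * (monomial (al (ev a)) (E0 phi) * monomial (be (ev b)) (E1 phi)).
suff : (#|I| <= #|'I_#|Es| | + #|'I_#|Es| | + #|'I_#|Es| |)%N.
  by rewrite card_ord /Es; lia.
apply: (@slice_rank_diagonal_le F #|I| _ _ _ f1 g1 f2 g2 f3 g3) => a b c.
rewrite -[a == b](inj_eq enum_val_inj) -[b == c](inj_eq enum_val_inj).
rewrite (tricolored_sumfree_indicator sumfree) prod_indicator_expansion.
rewrite [LHS](bigID (fun phi => E0 phi \in Es)).
rewrite [X in _ + X = _](bigID (fun phi => E1 phi \in Es)).
rewrite /= addrA; congr (_ + _ + _).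
- by rewrite -sum_by_low_exponent //; apply: eq_bigr => phi _; ring.
- rewrite -sum_by_low_exponent => [|phi /andP [] //].
  by apply: eq_bigr => phi _; ring.
- rewrite -sum_by_low_exponent => [|phi /andP []]; last exact: term_exponents_low.
  by apply: eq_bigr => phi _; ring.
Qed.

End TricoloredSumFree.

From mathcomp Require Import all_classical all_reals all_analysis lra.

Section LowDegreeCount.
Variables (R : realType) (F : finFieldType).
Local Notation q := #|F|.

Lemma Jfun_ge1 (x : R) : 0 < x < 1 -> 1 <= Jfun q x.
Proof.
move=> /andP [x0 x1]; rewrite /Jfun ler_pdivlMr ?powR_gt0 // mul1r.
apply: (@le_trans _ _ 1).
  rewrite -[X in _ <= X](powRr0 x); apply: ger_powR; first by rewrite x0 ltW.
  by rewrite divr_ge0 // subr_ge0 ler1n ltnW // card_finNzRing_gt1.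
rewrite -(prednK (ltnW (card_finNzRing_gt1 F))) big_ord_recl expr0.
by rewrite lerDl sumr_ge0 // => i _; rewrite exprn_ge0 // ltW.
Qed.

(* Rankin's trick: [e] of low degree gives [1 <= x ^ (deg e - #|C| (q-1)/3)]. *)
Lemma card_low_deg_exponents_le (C : finType) (x : R) : 0 < x < 1 ->
  (#|low_deg_exponents F C|%:R : R) <= Jfun q x ^+ #|C|.
Proof.
move=> /andP [x0 x1].
pose d : R := (q%:R - 1) / 3.
pose P := powR x d ^+ #|C|.
have P_gt0 : 0 < P by rewrite exprn_gt0 // powR_gt0.
have P_pow : P = powR x (#|C|%:R * d).
  by rewrite /P [_%:R * d]mulrC (powRrM x d #|C|%:R) powR_mulrn // powR_ge0.
have low_le e : ((e \in low_deg_exponents F C)%:R : R) <= x ^+ total_deg e / P.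
  have [e_low|_] := boolP (e \in low_deg_exponents F C); last first.
    by apply: divr_ge0; [apply: exprn_ge0; apply: ltW | apply: ltW].
  rewrite ler_pdivlMr // mul1r P_pow -powR_mulrn; last exact: ltW.
  apply: ger_powR; first by rewrite x0 ltW.
  move: e_low; rewrite inE /d => e_low.
  have -> : (q%:R - 1 : R) = (q.-1)%:R.
    by rewrite -{1}(prednK (ltnW (card_finNzRing_gt1 F))) -natr1 addrK.
  by rewrite mulrA ler_pdivlMr ?ltr0n // -!natrM ler_nat; lia.
have -> : (#|low_deg_exponents F C|%:R : R) =
          \sum_(e : {ffun C -> 'I_q}) ((e \in low_deg_exponents F C)%:R : R).
  rewrite -sum1_card natr_sum big_mkcond; apply: eq_bigr => e _.
  by case: (e \in _).
apply: le_trans (ler_sum _ (fun e _ => low_le e)) _.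
rewrite -mulr_suml.
have -> : \sum_(e : {ffun C -> 'I_q}) x ^+ total_deg e =
          \prod_(i : C) \sum_(j : 'I_q) x ^+ j.
  by rewrite bigA_distr_bigA /=; apply: eq_bigr => e _; rewrite -prodrXr.
by rewrite prodr_const /Jfun /P exprMn exprVn.
Qed.

End LowDegreeCount.

Lemma bernoulli_ineq (R : realFieldType) (y : R) n :
  0 <= y -> 1 + n%:R * y <= (1 + y) ^+ n.
Proof.
move=> y0; elim: n => [|n IH]; first by rewrite mul0r addr0 expr0.
rewrite exprSr; apply: le_trans (_ : (1 + n%:R * y) * (1 + y) <= _).
  have : 0 <= n%:R * y * y by rewrite !mulr_ge0.
  rewrite -natr1; nra.
by rewrite ler_wpM2r // addr_ge0.
Qed.

(* If [A > B] then [(A / B) ^+ t] is unbounded, by Bernoulli's inequality. *)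
Lemma le_of_exprn_le3 (R : archiRealFieldType) (A B : R) : 0 < B ->
  (forall t : nat, A ^+ t <= 3 * B ^+ t) -> A <= B.
Proof.
move=> B0 pow_le; rewrite leNgt; apply/negP => BA.
pose y := A / B - 1.
have y0 : 0 < y by rewrite subr_gt0 ltr_pdivlMr // mul1r.
pose t := (Num.truncn (2 / y)).+1.
have t_gt : 2 < t%:R * y by rewrite -ltr_pdivrMr // truncnS_gt.
have : (1 + y) ^+ t <= 3.
  by rewrite /y addrC subrK expr_div_n ler_pdivrMr ?exprn_gt0.
have := bernoulli_ineq t (ltW y0); lra.
Qed.

Section TensorPower.
Variables (F : finFieldType) (C I : finType) (t : nat).

Definition tensor_pow (al : I -> C -> F) (f : {ffun 'I_t -> I}) (p : 'I_t * C) : F :=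
  al (f p.1) p.2.

Lemma tricolored_sumfree_tensor_pow (al be ga : I -> C -> F) :
  tricolored_sumfree al be ga ->
  tricolored_sumfree (tensor_pow al) (tensor_pow be) (tensor_pow ga).
Proof.
move=> sumfree f g h; split => [fgh0 | [-> ->] [s i]]; last first.
  exact: (proj2 (sumfree _ _ _) (conj erefl erefl) i).
have fgh s : f s = g s /\ g s = h s by apply/sumfree => i; exact: (fgh0 (s, i)).
by split; apply/ffunP => s; have [] := fgh s.
Qed.

End TensorPower.

(* The bound [3 J(x)^(t #|C|)] for the [t]-th tensor power, with [t -> oo],
   removes the factor [3]. *)
Lemma tricolored_sumfree_card_le_Jfun (R : realType) (F : finFieldType)
    (C I : finType) (al be ga : I -> C -> F) :
  tricolored_sumfree al be ga ->
  forall x : R, 0 < x < 1 -> (#|I|%:R : R) <= Jfun #|F| x ^+ #|C|.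
Proof.
move=> sumfree x x01; apply: le_of_exprn_le3 => [|t].
  by rewrite exprn_gt0 // (lt_le_trans ltr01) // Jfun_ge1.
have := tricolored_sumfree_card_le (tricolored_sumfree_tensor_pow (t := t) sumfree).
rewrite card_ffun card_ord -(ler_nat R) natrM natrX => /le_trans; apply.
rewrite -exprM mulnC ler_wpM2l //.
have := @card_low_deg_exponents_le R F ('I_t * C)%type x x01.
by rewrite card_prod card_ord.
Qed.

Section GammaBounds.
Variables (R : realType) (F : finFieldType).
Local Notation q := #|F|.

Definition Jvalues : set R := [set y | exists x : R, 0 < x < 1 /\ y = Jfun q x].

Lemma Gamma_inf : Gamma R q = inf Jvalues.
Proof.
rewrite /Gamma /Jconst mulrA mulfV ?mul1r //.
by rewrite pnatr_eq0 -lt0n ltnW // card_finNzRing_gt1.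
Qed.

Lemma half_in01 : 0 < (2^-1 : R) < 1.
Proof. by rewrite invr_gt0 ltr0n /= invf_lt1 // ltr1n. Qed.

Lemma Jvalues_neq0 : (Jvalues !=set0)%classic.
Proof. by exists (Jfun q (2^-1 : R)), 2^-1; split => //; exact: half_in01. Qed.

Lemma Gamma_ge1 : 1 <= Gamma R q.
Proof.
rewrite Gamma_inf; apply: lb_le_inf; first exact: Jvalues_neq0.
by move=> y [x [x01 ->]]; exact: Jfun_ge1.
Qed.

Lemma le_Gamma_exprn (n : nat) (a : R) : 0 <= a ->
  (forall x : R, 0 < x < 1 -> a <= Jfun q x ^+ n) -> a <= Gamma R q ^+ n.
Proof.
move=> a0 le_J.
case: n le_J => [|n] le_J.
  by rewrite expr0; have := le_J _ half_in01; rewrite expr0.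
pose z := powR a (n.+1%:R^-1).
have z_pow : z ^+ n.+1 = a.
  by rewrite /z -powR_mulrn ?powR_ge0 // -powRrM mulVf ?powRr1 // pnatr_eq0.
have z0 : 0 <= z by rewrite powR_ge0.
have [zG|Gz] := leP z (Gamma R q).
  by rewrite -z_pow lerXn2r // nnegrE (le_trans _ Gamma_ge1).
move: Gz; rewrite Gamma_inf => /(inf_lt Jvalues_neq0) [y [x [x01 ->]]] Jz.
have J0 : 0 <= Jfun q x := le_trans ler01 (Jfun_ge1 F x01).
by have := le_J x x01; rewrite -z_pow leNgt ltrXn2r.
Qed.

End GammaBounds.

Section SwapGraph.
Variables (F : finFieldType) (m k n L : nat) (A : 'M[F]_(m, k)) (j1 j2 : 'I_k).
Variables (x : 'I_L -> 'I_k -> 'rV[F]_n) (c : F).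
Hypotheses (j12 : j1 != j2) (c0 : c != 0) (colA : col j1 A = c *: col j2 A).
Hypothesis disjoint_x : forall i i', i != i' -> forall j j', x i j != x i' j'.

Lemma sum_scale_agree_off (s : 'I_k -> F) (z z' : 'I_k -> 'rV[F]_n) :
  (forall j, j != j1 -> j != j2 -> z j = z' j) ->
  \sum_j s j *: z j =
  \sum_j s j *: z' j + s j1 *: (z j1 - z' j1) + s j2 *: (z j2 - z' j2).
Proof.
move=> zz'; apply/eqP; rewrite -addrA -subr_eq0 opprD addrA -sumrB.
rewrite (bigD1 j1) //= (bigD1 j2) 1?eq_sym //= big1 ?addr0.
  by rewrite -!scalerBr subrr.
by move=> j /andP [jj1 jj2]; rewrite zz' // subrr.
Qed.

Definition swap (a b i : 'I_L) (j : 'I_k) : 'rV[F]_n :=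
  if j == j1 then x a j1 else if j == j2 then x b j2 else x i j.

Definition compatible (a b i : 'I_L) : bool :=
  c *: x a j1 + x b j2 == c *: x i j1 + x i j2.

Lemma swap_off a b i j : j != j1 -> j != j2 -> swap a b i j = x i j.
Proof. by rewrite /swap => /negPf -> /negPf ->. Qed.

Lemma swap_j1 a b i : swap a b i j1 = x a j1.
Proof. by rewrite /swap eqxx. Qed.

Lemma swap_j2 a b i : swap a b i j2 = x b j2.
Proof. by rewrite /swap eq_sym (negPf j12) eqxx. Qed.

Lemma sum_scale_swap a b i (s : 'I_k -> F) :
  \sum_j s j *: swap a b i j = \sum_j s j *: x i j
     + s j1 *: (x a j1 - x i j1) + s j2 *: (x b j2 - x i j2).
Proof.
by rewrite (@sum_scale_agree_off s _ (x i)) ?swap_j1 ?swap_j2 // => j; exact: swap_off.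
Qed.

Lemma compatible_j2 a b i :
  compatible a b i -> x b j2 - x i j2 = - (c *: (x a j1 - x i j1)).
Proof.
move/eqP => comp; apply/eqP; rewrite -addr_eq0 scalerBr addrACA -opprD.
by rewrite [x b j2 + _]addrC [x i j2 + _]addrC comp subrr.
Qed.

Lemma A_j1 r : A r j1 = c * A r j2.
Proof. by have := congr1 (fun M : 'cV[F]_m => M r 0) colA; rewrite !mxE. Qed.

Lemma swap_solution a b i :
  is_solution A (x i) -> compatible a b i -> is_solution A (swap a b i).
Proof.
move=> sol_i comp r; rewrite sum_scale_swap sol_i add0r A_j1 mulrC -scalerA.
by rewrite -scalerDr (compatible_j2 comp) subrr scaler0.
Qed.

Lemma proportional_not_breaks (w : 'rV[F]_k) :
  w 0 j1 = c * w 0 j2 -> ~ breaks A j1 j2 w.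
Proof.
move=> w_j1; apply; exists c; split => //.
apply/matrixP => r z; rewrite !mxE; case: splitP => r' _; rewrite ?A_j1 //.
by rewrite (ord1 r') w_j1.
Qed.

Lemma Ann_bal_swap_proportional a b i (w : 'rV[F]_k) :
  compatible a b i -> Ann_bal (swap a b i) w -> w 0 j1 = c * w 0 j2 ->
  Ann_bal (x i) w.
Proof.
move=> comp [ann sum0] w_j1; split => //; move: ann.
rewrite (sum_scale_swap a b i (fun j => w 0 j)) /= (compatible_j2 comp) w_j1.
by rewrite mulrC -scalerA scalerN addrK.
Qed.

(* The value of [x a j1] forced when [w] annihilates [swap a b i]. *)
Definition forced_j1 (i : 'I_L) (w : 'rV[F]_k) : 'rV[F]_n :=
  x i j1 - (w 0 j1 - c * w 0 j2)^-1 *: \sum_j w 0 j *: x i j.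

Lemma forced_j1E a b i (w : 'rV[F]_k) :
  compatible a b i -> Ann_bal (swap a b i) w -> w 0 j1 != c * w 0 j2 ->
  x a j1 = forced_j1 i w.
Proof.
move=> comp [ann _] w_j1; move: ann.
rewrite (sum_scale_swap a b i (fun j => w 0 j)) /= (compatible_j2 comp).
rewrite scalerN scalerA -addrA -scalerBl [w 0 j2 * c]mulrC => ann.
have w_nz : w 0 j1 - c * w 0 j2 != 0 by rewrite subr_eq0.
have diff_j1 : x a j1 - x i j1 =
    - ((w 0 j1 - c * w 0 j2)^-1 *: \sum_j w 0 j *: x i j).
  apply: (scalerI w_nz); rewrite scalerN scalerA mulfV // scale1r.
  by apply/eqP; rewrite -addr_eq0 addrC ann.
by rewrite /forced_j1 -diff_j1 addrC subrK.
Qed.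

Definition swap_edge (i a : 'I_L) : bool :=
  (a != i) &&
  [exists w : 'rV[F]_k, (w 0 j1 != c * w 0 j2) && (x a j1 == forced_j1 i w)].

(* By disjointness, distinct out-neighbours of [i] need distinct witnesses [w],
   and [w = 0] is never a witness. *)
Lemma card_swap_edge_le i : (#|[set a | swap_edge i a]| <= (#|F| ^ k).-1)%N.
Proof.
pose witness a (w : 'rV[F]_k) := (w 0 j1 != c * w 0 j2) && (x a j1 == forced_j1 i w).
pose g a : 'rV[F]_k := odflt 0 [pick w | witness a w].
have g_wit a : a \in [set a | swap_edge i a] -> witness a (g a).
  rewrite inE => /andP [_ /existsP [w w_wit]].
  by rewrite /g; case: pickP => [//|/(_ w)]; rewrite /witness w_wit.
have g_inj : {in [set a | swap_edge i a] &, injective g}.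
  move=> a a' a_edge a'_edge g_eq; have /andP [_ /eqP ga] := g_wit a a_edge.
  have /andP [_ /eqP ga'] := g_wit a' a'_edge.
  apply/eqP/negPn/negP => aa'; have := disjoint_x aa' j1 j1.
  by rewrite ga ga' g_eq eqxx.
pose Ws := [set w : 'rV[F]_k | w 0 j1 != c * w 0 j2].
have sub_Ws : g @: [set a | swap_edge i a] \subset Ws.
  apply/fintype.subsetP => w /imsetP [a a_edge ->]; rewrite inE.
  by have /andP [] := g_wit a a_edge.
rewrite -(card_in_imset g_inj); apply: leq_trans (subset_leq_card sub_Ws) _.
have : Ws \proper [set: 'rV[F]_k].
  apply/properP; split; first exact: finset.subsetT.
  by exists 0; rewrite ?inE // !mxE mulr0 eqxx.
move/proper_card; rewrite cardsT card_mx mul1n => Ws_lt.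
by rewrite -ltnS prednK // (leq_ltn_trans _ Ws_lt).
Qed.

Definition good_swap (i : 'I_L) (y : 'I_k -> 'rV[F]_n) : Prop :=
  [/\ is_solution A y,
      (forall j, j != j1 -> j != j2 -> y j = x i j),
      (forall j, (j == j1) || (j == j2) -> exists i' : 'I_L, y j = x i' j),
      (forall b, Ann_bal y b -> Ann_bal (x i) b)
    & (forall b, Ann_bal y b -> ~ breaks A j1 j2 b)].

Hypothesis sol_x : forall i, is_solution A (x i).
Hypothesis no_good_swap : ~ exists i y, good_swap i y.

Lemma compatible_swap_annihilator a b i : compatible a b i ->
  exists2 w, Ann_bal (swap a b i) w & w 0 j1 != c * w 0 j2.
Proof.
move=> comp; apply: contrapT => no_w; apply: no_good_swap.
have w_j1 w : Ann_bal (swap a b i) w -> w 0 j1 = c * w 0 j2.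
  by move=> ann; apply/eqP/negPn/negP => w_j1; apply: no_w; exists w.
exists i, (swap a b i); split.
- exact: swap_solution.
- exact: swap_off.
- by move=> j /orP [] /eqP ->; [exists a; rewrite swap_j1 | exists b; rewrite swap_j2].
- by move=> w ann; exact: Ann_bal_swap_proportional ann (w_j1 w ann).
- by move=> w ann; exact: proportional_not_breaks (w_j1 w ann).
Qed.

Lemma independent_compatible (S : {set 'I_L}) : independent swap_edge S ->
  forall a b i, a \in S -> b \in S -> i \in S -> compatible a b i -> a = b /\ b = i.
Proof.
move=> ind_S a b i aS bS iS comp.
have [ai|ai] := eqVneq a i.
  subst a; have [->//|bi] := eqVneq b i.
  by have := disjoint_x bi j2 j2; rewrite (addrI _ (eqP comp)) eqxx.
have [w ann w_j1] := compatible_swap_annihilator comp.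
have := ind_S i a iS aS; rewrite eq_sym ai => /(_ isT) /negP; case.
rewrite /swap_edge ai /=; apply/existsP; exists w; rewrite w_j1 /=.
by apply/eqP; exact: forced_j1E ann w_j1.
Qed.

(* On [S], [c x_a j1 + x_b j2 - (c x_i j1 + x_i j2) = 0] forces [a = b = i]. *)
Lemma card_independent_le_Gamma (R : realType) (S : {set 'I_L}) :
  independent swap_edge S -> (#|S|%:R : R) <= Gamma R #|F| ^+ n.
Proof.
move=> ind_S.
pose al (a : {a | a \in S}) (l : 'I_n) := (c *: x (val a) j1) 0 l.
pose be (a : {a | a \in S}) (l : 'I_n) := x (val a) j2 0 l.
pose ga (a : {a | a \in S}) (l : 'I_n) := - (c *: x (val a) j1 + x (val a) j2) 0 l.
have sumfree : tricolored_sumfree al be ga.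
  move=> a b i; split => [sum0 | [-> ->] l]; last by rewrite /al /be /ga !mxE subrr.
  have comp : compatible (val a) (val b) (val i).
    apply/eqP/rowP => l; have := sum0 l; rewrite /al /be /ga !mxE.
    by move/eqP; rewrite addrC addr_eq0 opprK => /eqP ->.
  by have [? ?] := independent_compatible ind_S (valP a) (valP b) (valP i) comp;
    split; apply: val_inj.
have card_sig : #|{: {a | a \in S}}| = #|S| by rewrite card_sig; apply: eq_card.
rewrite -card_sig; apply: le_Gamma_exprn => // z z01.
by have := tricolored_sumfree_card_le_Jfun sumfree z01; rewrite card_ord.
Qed.

End SwapGraph.

Lemma turan_count_lt (R : realFieldType) (L s Q : nat) (G : R) :
  (0 < Q)%N -> 1 <= G -> (L <= (2 * Q.-1).+1 * s)%N -> s%:R <= G ->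
  L%:R < 4 * Q%:R * G.
Proof.
move=> Q_gt0 G_ge1; rewrite -(ler_nat R) => /le_trans L_le s_le.
have G_gt0 : 0 < G := lt_le_trans ltr01 G_ge1.
rewrite (le_lt_trans (L_le (((2 * Q.-1).+1)%:R * G) _)) //.
  by rewrite natrM ler_wpM2l.
rewrite ltr_pM2r // -(prednK Q_gt0) -addn1 natrD -natr1 natrM.
have : 0 <= Q.-1%:R :> R by [].
lra.
Qed.

Theorem lemma6p4 (R : realType) (F : finFieldType) (m k n L : nat)
  (A : 'M[F]_(m, k)) (j1 j2 : 'I_k)
  (x : 'I_L -> 'I_k -> 'rV[F]_n) :
  type_RC A -> non_degenerate A -> irreducible_sys A ->
  j1 != j2 -> col_equiv A j1 j2 ->
  (forall i, is_solution A (x i)) ->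
  (forall i i', i != i' -> forall j j', x i j != x i' j') ->
  4 * (#|F|%:R ^+ k) * (Gamma R #|F|) ^+ n <= (L%:R : R) ->
  exists (i : 'I_L) (y : 'I_k -> 'rV[F]_n),
    [/\ is_solution A y,
        (forall j, j != j1 -> j != j2 -> y j = x i j),
        (forall j, (j == j1) || (j == j2) -> exists i' : 'I_L, y j = x i' j),
        (forall b, Ann_bal y b -> Ann_bal (x i) b)
      & (forall b, Ann_bal y b -> ~ breaks A j1 j2 b)].
Proof.
move=> _ _ _ j12 [c [c0 colA]] sol_x disjoint_x L_ge.
apply: contrapT => no_good_swap.
have [S [ind_S card_S]] :=
  exists_large_independent (card_swap_edge_le j1 j2 c disjoint_x).
have S_le :=
  card_independent_le_Gamma j12 c0 colA disjoint_x sol_x no_good_swap R ind_S.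
move: L_ge; apply/negP; rewrite -ltNge -natrX.
rewrite card_ord in card_S.
apply: turan_count_lt card_S S_le; last exact: exprn_ege1 (Gamma_ge1 R F).
by rewrite expn_gt0 (ltnW (card_finNzRing_gt1 F)).
Qed.
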